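(* Let $n\ge 3$ and $m\ge 2$ be integers, $C_n$ the cycle on $n$ vertices and $P_m$ the path on $m$ vertices. Then $AT(C_n+_S P_m)=3$.
   Context: For an orientation $D$, a subdigraph is Eulerian if every vertex has equal in- and outdegree in it; $D$ is an AT-orientation if the numbers of Eulerian subgraphs with an even and with an odd number of arcs differ; $AT(G)$ is the smallest $k$ such that $G$ has an AT-orientation of maximum outdegree at most $k-1$. $S(G)$ is obtained from $G$ by subdividing each edge once, with vertex set identified with $V(G)\cup E(G)$. $G+_S H$ has vertex set $(V(G)\cup E(G))\times V(H)$, with $(u_1,u_2)\sim(v_1,v_2)$ iff [$u_1=v_1\in V(G)$ and $u_2v_2\in E(H)$] or [$u_2=v_2$ and $u_1v_1\in E(S(G))$]. *)

(* Simple graphs are symmetric irreflexive relations on a finType. *)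
From mathcomp Require Import all_boot.
Set Implicit Arguments. Unset Strict Implicit. Unset Printing Implicit Defensive.

Section Orientations.
Variable T : finType.

Definition is_orientation (e D : rel T) : Prop :=
  (forall x y, e x y = (D x y || D y x)) /\ (forall x y, ~~ (D x y && D y x)).

Definition outdeg (D : rel T) (v : T) : nat := #|[set w | D v w]|.

Definition eulerian (D : rel T) (A : {set T * T}) : bool :=
  [forall p in A, D p.1 p.2] &&
  [forall v, #|[set w | (v, w) \in A]| == #|[set w | (w, v) \in A]|].

Definition n_even_eulerian (D : rel T) : nat :=
  #|[set A : {set T * T} | eulerian D A & ~~ odd #|A|]|.
Definition n_odd_eulerian (D : rel T) : nat :=
  #|[set A : {set T * T} | eulerian D A & odd #|A|]|.

Definition AT_orientation (e D : rel T) : Prop :=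
  is_orientation e D /\ n_even_eulerian D <> n_odd_eulerian D.

Definition has_AT (e : rel T) (k : nat) : Prop :=
  exists D : rel T, AT_orientation e D /\ forall v, outdeg D v < k.

Definition AT_number_is (e : rel T) (k : nat) : Prop :=
  has_AT e k /\ forall j, j < k -> ~ has_AT e j.
End Orientations.

Section Subdivision.
Variable V : finType.
Variable e : rel V.

Definition edge_type : Type :=
  {X : {set V} | [exists u, exists v, e u v && (X == [set u; v])]}.

Definition svert : finType := (V + edge_type)%type.

Definition sadj : rel svert := fun a b =>
  match a, b with
  | inl v, inr X => v \in val X
  | inr X, inl v => v \in val X
  | _, _ => false
  end.

Variable W : finType.
Variable h : rel W.

Definition splus_adj : rel (svert * W) := fun a b =>
  (match a.1, b.1 with
   | inl u, inl v => (u == v) && h a.2 b.2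
   | _, _ => false
   end)
  || ((a.2 == b.2) && sadj a.1 b.1).
End Subdivision.

Definition cycle_adj (n : nat) : rel (ordinal n) := fun (i j : ordinal n) =>
  (j == (i.+1 %% n) :> nat) || (i == (j.+1 %% n) :> nat).

Definition path_adj (m : nat) : rel (ordinal m) := fun (i j : ordinal m) =>
  (i.+1 == j :> nat) || (j.+1 == i :> nat).

Arguments cycle_adj n : clear implicits.
Arguments path_adj m : clear implicits.
Arguments splus_adj {V} e {W} h.

(* Upper bound: orient every edge of C_n +_S P_m downwards with respect to a
   height function (copy a of V(C_n) at height a, subdivision vertices on top).
   This orientation is acyclic, so its only Eulerian subgraph is the empty one,
   and every vertex has outdegree at most 2.
   Lower bound: every vertex has degree at least 2 and some vertex degree 3, so
   by the handshake identity no orientation has all outdegrees at most 1. *)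
From mathcomp Require Import all_boot zify.
Set Implicit Arguments. Unset Strict Implicit. Unset Printing Implicit Defensive.

Section OrientationCounting.
Variable T : finType.
Implicit Types (e D : rel T) (f : T -> nat) (A : {set T * T}).

Definition degree e x : nat := #|[set y | e x y]|.

Definition rank_orient e f : rel T := fun x y => e x y && (f y < f x).

Lemma rank_orient_orientation e f :
  symmetric e -> (forall x y, e x y -> f x != f y) ->
  is_orientation e (rank_orient e f).
Proof.
move=> esym ef; split=> x y; rewrite /rank_orient.
- rewrite (esym y x); case exy: (e x y) => //=.
  by have := ef _ _ exy; lia.
- by apply/negP => /andP[/andP[_ ?] /andP[_ ?]]; lia.
Qed.

Lemma eulerian0 D : eulerian D set0.
Proof.
apply/andP; split; apply/forallP => v; first by rewrite inE.
by rewrite !eq_card0 // => w; rewrite !inE.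
Qed.

(* A vertex of maximal rank on an arc of A has an incoming arc, from a vertex
   of even larger rank. *)
Lemma eulerian_rank_decreasing D f A :
  (forall x y, D x y -> f y < f x) -> eulerian D A -> A = set0.
Proof.
move=> Df /andP[/forall_inP AD /forallP bal].
case: (set_0Vmem A) => [//|[p0 Ap0]].
case: (arg_maxnP (fun p : T * T => f p.1) Ap0) => p Ap pmax.
have : 0 < #|[set w | (w, p.1) \in A]|.
  rewrite -(eqP (bal p.1)); apply/card_gt0P; exists p.2.
  by rewrite inE -surjective_pairing.
case/card_gt0P => w; rewrite inE => wA.
by have := Df _ _ (AD _ wA); have := pmax _ wA; rewrite /=; lia.
Qed.

Lemma AT_orientation_rank_decreasing e D f :
  is_orientation e D -> (forall x y, D x y -> f y < f x) -> AT_orientation e D.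
Proof.
move=> oD Df; split=> //.
have eul A : eulerian D A = (A == set0).
  by apply/idP/eqP => [|->]; [exact: eulerian_rank_decreasing Df | exact: eulerian0].
rewrite /n_even_eulerian /n_odd_eulerian.
have -> : [set A | eulerian D A & ~~ odd #|A|] = [set set0].
  by apply/setP => A; rewrite !inE eul; case: eqP => // ->; rewrite cards0.
have -> : [set A | eulerian D A & odd #|A|] = set0.
  by apply/setP => A; rewrite !inE eul; case: eqP => // ->; rewrite cards0.
by rewrite cards1 cards0.
Qed.

Lemma sum_degree_orientation e D :
  is_orientation e D -> \sum_x degree e x = 2 * \sum_x outdeg D x.
Proof.
case=> eD antiD.
have cardE (P : pred T) : #|[set y | P y]| = \sum_y (P y : nat).
  by rewrite -sum1dep_card big_mkcond; apply: eq_bigr => y _; case: (P y).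
have -> : \sum_x degree e x = \sum_x \sum_y ((D x y : nat) + D y x).
  apply: eq_bigr => x _; rewrite /degree cardE; apply: eq_bigr => y _.
  by rewrite eD; have := antiD x y; case: (D x y); case: (D y x).
under eq_bigr => x _ do rewrite big_split.
rewrite big_split /= [X in _ + X]exchange_big /= mul2n -addnn.
by congr (_ + _); apply: eq_bigr => x _; rewrite /outdeg cardE.
Qed.

(* With outdegrees at most 1 the degree sum would be at most 2|V(G)|. *)
Lemma not_has_AT_lt3 e x0 j :
  (forall x, 2 <= degree e x) -> 3 <= degree e x0 -> j < 3 -> ~ has_AT e j.
Proof.
move=> deg_ge2 deg_x0 j_lt3 [D [[oD _] outD]].
have out_le (x : T) : 2 * outdeg D x <= 2 by have := outD x; lia.
have lt_x0 : 2 * outdeg D x0 < degree e x0 by have := out_le x0; lia.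
have le_rest : \sum_(x | x != x0) 2 * outdeg D x <= \sum_(x | x != x0) degree e x.
  by apply: leq_sum => x _; apply: leq_trans (out_le x) (deg_ge2 x).
have := sum_degree_orientation oD.
rewrite big_distrr /= (bigD1 x0) //= [in RHS](bigD1 x0) //= => sumE.
by have := leq_add lt_x0 le_rest; rewrite sumE ltnn.
Qed.

End OrientationCounting.

Section SubdividedSumWithPath.
Variables (V : finType) (e : rel V) (m : nat).
Local Notation vertex := (svert e * 'I_m)%type.
Local Notation SP := (splus_adj e (path_adj m)).

Lemma splus_path_sym : symmetric SP.
Proof.
move=> [[u|X] a] [[v|Y] b]; rewrite /splus_adj /= ?(eq_sym a b) //.
by rewrite !andbF !orbF (eq_sym u v) /path_adj orbC.
Qed.

Definition height (x : vertex) : nat := if x.1 is inl _ then val x.2 else m.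

Lemma splus_path_height_neq x y : SP x y -> height x != height y.
Proof.
case: x y => [[u|X] a] [[v|Y] b]; rewrite /splus_adj /height /= ?andbF ?orbF //.
- by rewrite /path_adj => /andP[_ /orP[] /eqP]; lia.
- by have := ltn_ord a; lia.
- by have := ltn_ord b; lia.
Qed.

Lemma outdeg_height_orient x : outdeg (rank_orient SP height) x <= 2.
Proof.
rewrite /outdeg; case: x => [[v|X] a].
- apply: leq_trans (_ : 1 <= 2) => //; apply/card_le1_eqP.
  move=> [[u1|Y1] b1] [[u2|Y2] b2]; rewrite !inE /rank_orient /splus_adj /height /=
    ?andbF ?orbF /path_adj; try by have := ltn_ord a; lia.
  move=> /andP[/andP[/eqP <- ?] ?] /andP[/andP[/eqP <- ?] ?].
  by congr (_, _); apply/val_inj => /=; lia.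
- case/existsP: (valP X) => u /existsP[w /andP[_ /eqP defX]].
  apply: leq_trans (card_size [:: (inl u, a); (inl w, a)]).
  apply/subset_leq_card/subsetP => -[[v|Y] b];
    rewrite !inE /rank_orient /splus_adj /height /= ?andbF ?orbF //.
  move=> /andP[/andP[/eqP <-]]; rewrite -[sval X]/(val X) defX !inE.
  by case/orP=> /eqP -> _; rewrite eqxx ?orbT.
Qed.

Lemma splus_path_has_AT3 : has_AT SP 3.
Proof.
exists (rank_orient SP height); split=> [|x]; last exact: outdeg_height_orient.
apply: (AT_orientation_rank_decreasing (f := height)) => [|x y /andP[_ //]].
exact: rank_orient_orientation splus_path_sym splus_path_height_neq.
Qed.

Hypothesis e_irr : irreflexive e.
Hypothesis m_gt1 : 1 < m.

Lemma sedge_subproof u v : e u v ->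
  [exists u', exists v', e u' v' && ([set u; v] == [set u'; v'])].
Proof. by move=> euv; apply/existsP; exists u; apply/existsP; exists v; rewrite euv eqxx. Qed.

Definition sedge u v (euv : e u v) : edge_type e := exist _ [set u; v] (sedge_subproof euv).

Lemma path_nbr_subproof (a : 'I_m) : (if a == 0 :> nat then 1 else a.-1) < m.
Proof. by case: ifP => _; have := ltn_ord a; lia. Qed.

Definition path_nbr (a : 'I_m) : 'I_m := Ordinal (path_nbr_subproof a).

Lemma splus_path_nbr v a : SP (inl v, a) (inl v, path_nbr a).
Proof. by rewrite /splus_adj /= eqxx /path_adj /=; case: ifP => /eqP; lia. Qed.

Lemma splus_sedge v w (evw : e v w) a : SP (inl v, a) (inr (sedge evw), a).
Proof. by rewrite /splus_adj /= eqxx !inE eqxx. Qed.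

Lemma edge_set_inj v w1 w2 : e v w2 -> [set v; w1] = [set v; w2] -> w1 = w2.
Proof.
move=> evw2 /setP/(_ w2); rewrite !inE eqxx orbT.
by case/orP=> /eqP // w2v; move: evw2; rewrite w2v e_irr.
Qed.

Lemma splus_path_degree_ge2 x : (forall v, 0 < degree e v) -> 2 <= degree SP x.
Proof.
move=> deg_pos; case: x => [[v|X] a].
- case/card_gt0P: (deg_pos v) => w; rewrite inE => evw.
  apply/card_geqP; exists [:: (inl v, path_nbr a); (inr (sedge evw), a)]; split=> //.
  by move=> y; rewrite !inE => /orP[] /eqP ->; [exact: splus_path_nbr | exact: splus_sedge].
- case/existsP: (valP X) => u /existsP[w /andP[euw /eqP defX]].
  apply/card_geqP; exists [:: (inl u, a); (inl w, a)]; split=> //.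
    by rewrite /= andbT inE; apply: contraTneq euw => -[->]; rewrite e_irr.
  by move=> y; rewrite !inE => /orP[] /eqP ->;
    rewrite /splus_adj /= eqxx -[sval X]/(val X) defX !inE eqxx ?orbT.
Qed.

Lemma splus_path_degree_ge3 v a : 1 < degree e v -> 3 <= degree SP (inl v, a).
Proof.
case/card_gt1P => w1 [w2 []]; rewrite !inE => evw1 evw2 w12.
apply/card_geqP; exists [:: (inl v, path_nbr a); (inr (sedge evw1), a); (inr (sedge evw2), a)].
split=> //.
- by rewrite /= !inE !andbT; apply: contra w12 => /eqP[] /(edge_set_inj evw2) ->.
- by move=> y; rewrite !inE => /or3P[] /eqP ->;
    [exact: splus_path_nbr | exact: splus_sedge | exact: splus_sedge].
Qed.

Lemma splus_path_not_has_AT_lt3 j :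
  0 < #|V| -> (forall v, 1 < degree e v) -> j < 3 -> ~ has_AT SP j.
Proof.
move=> V_gt0 deg_gt1; case/card_gt0P: V_gt0 => v0 _.
have a0 : 'I_m by exists 0; lia.
apply: (not_has_AT_lt3 (x0 := (inl v0, a0))) => [x|]; last exact: splus_path_degree_ge3.
by apply: splus_path_degree_ge2 => v; apply: ltnW.
Qed.

End SubdividedSumWithPath.

Lemma cycle_adj_irreflexive n : 1 < n -> irreflexive (cycle_adj n).
Proof.
move=> n_gt1 u; rewrite /cycle_adj orbb; apply/negbTE/eqP => /=.
have := ltn_ord u; case: (ltngtP u.+1 n) => [u_lt | // | u_eq] _.
- by rewrite modn_small //; lia.
- by rewrite u_eq modnn; lia.
Qed.

Lemma cycle_adj_degree n (u : 'I_n) : 2 < n -> 1 < degree (cycle_adj n) u.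
Proof.
move=> n_gt2; have u_lt := ltn_ord u.
have succ_lt : u.+1 %% n < n by apply: ltn_pmod; lia.
have pred_lt : (if u == 0 :> nat then n.-1 else u.-1) < n by case: ifP; lia.
have pred_mod : (if u == 0 :> nat then n.-1 else u.-1).+1 %% n = u.
  case: ifP => /eqP u0; last by rewrite prednK ?modn_small //; lia.
  by rewrite prednK ?modnn ?u0 //; lia.
have succ_mod : u.+1 %% n = if u == n.-1 :> nat then 0 else u.+1.
  case: ifP => /eqP un; last by rewrite modn_small //; lia.
  by rewrite un prednK ?modnn //; lia.
apply/card_gt1P; exists (Ordinal succ_lt), (Ordinal pred_lt).
rewrite !inE /cycle_adj /= pred_mod !eqxx orbT; split=> //.
by apply/eqP => /(congr1 val) /=; rewrite succ_mod; do 2 case: ifP; lia.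
Qed.

Theorem corollary3p4 (n m : nat) :
  3 <= n -> 2 <= m ->
  AT_number_is (splus_adj (cycle_adj n) (path_adj m)) 3.
Proof.
move=> n_ge3 m_ge2; split; first exact: splus_path_has_AT3.
move=> j; apply: splus_path_not_has_AT_lt3.
- by apply: cycle_adj_irreflexive; lia.
- exact: m_ge2.
- by rewrite card_ord; lia.
- by move=> u; apply: cycle_adj_degree; lia.
Qed.
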